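(* If $S$ is an idempotent semiring satisfying $x\approx xyx+x+xyx$ (equivalently, $\mathcal{D}^{\bullet}$ is the least distributive lattice congruence on $S$), then the multiplicative reduct $(S,\cdot)$ is a normal band, i.e. $xyzx=xzyx$ for all $x,y,z\in S$.
   Context: An idempotent semiring is an algebra $(S,+,\cdot)$ with $(S,+)$, $(S,\cdot)$ bands and both distributive laws; addition not assumed commutative. $a\,\mathcal{D}^{\bullet}\,b$ iff $aba=a$ and $bab=b$. A distributive lattice congruence is a congruence $\rho$ with $S/\rho$ satisfying $x+y\approx y+x$, $xy\approx yx$, $x+xy\approx x$. *)

(* An idempotent semiring (S,+,.): (S,+) and (S,.) are bands (associative,
   idempotent; addition NOT assumed commutative), and both distributive laws hold. *)
Definition idempotent_semiring (S : Type) (add mul : S -> S -> S) : Prop :=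
  (forall x y z, add x (add y z) = add (add x y) z) /\
  (forall x, add x x = x) /\
  (forall x y z, mul x (mul y z) = mul (mul x y) z) /\
  (forall x, mul x x = x) /\
  (forall x y z, mul x (add y z) = add (mul x y) (mul x z)) /\
  (forall x y z, mul (add x y) z = add (mul x z) (mul y z)).

Definition normal_band (S : Type) (mul : S -> S -> S) : Prop :=
  forall x y z, mul (mul (mul x y) z) x = mul (mul (mul x z) y) x.

(* The identity x = xyx + x + xyx forces x + xyx = x = xyx + x, so every
   element of the local submonoid xSx is absorbed additively by x.  For u, v in
   xSx distributivity then gives u = u + uv = uv + u = u + vu = vu + u, whence
   uv = uvu = vu: the local submonoids are commutative.  In any band, p = xyzx
   and q = xzyx satisfy pqp = p and qpq = q, and two such commuting idempotents
   are equal. *)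

From Stdlib Require Import List.
Import ListNotations.

Section Band.
Variables (S : Type) (mul : S -> S -> S).
Hypothesis mul_assoc : forall x y z, mul x (mul y z) = mul (mul x y) z.
Hypothesis mul_idem : forall x, mul x x = x.

Fixpoint word (a : S) (l : list S) : S :=
  match l with nil => a | b :: l' => mul a (word b l') end.

Lemma word_cat a l b m : word a (l ++ b :: m) = mul (word a l) (word b m).
Proof.
  revert a; induction l as [|c l IH]; intro a; simpl; [reflexivity|].
  now rewrite IH, mul_assoc.
Qed.

Lemma word_square_head b w r : word b (w ++ b :: w ++ r) = word b (w ++ r).
Proof.
  rewrite word_cat. destruct r as [|c r].
  - now rewrite app_nil_r, mul_idem.
  - now rewrite !word_cat, mul_assoc, mul_idem.
Qed.

Lemma word_square a l b w r :
  word a (l ++ b :: w ++ b :: w ++ r) = word a (l ++ b :: w ++ r).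
Proof. now rewrite (word_cat a l b (w ++ r)), word_cat, word_square_head. Qed.

Lemma mul_idem_r a b : mul (mul a b) b = mul a b.
Proof. now rewrite <- mul_assoc, mul_idem. Qed.

Lemma band_D_xyzx_xzyx x y z :
  let p := mul (mul (mul x y) z) x in
  let q := mul (mul (mul x z) y) x in
  mul (mul p q) p = p.
Proof.
  intros p q.
  (* Each step inserts or deletes one repeated factor [bw bw]. *)
  assert (W : word x [y;z;x;z;y;x;y;z;x] = word x [y;z;x]).
  { transitivity (word x [y;x;y;z;x;z;y;x;y;z;x]).
    { symmetry. exact (word_square_head x [y] [z;x;z;y;x;y;z;x]). }
    transitivity (word x [y;x;y;z;x;z;y;x;y;z;x;z;x]).
    { symmetry. exact (word_square x [y;x;y;z;x;z;y;x;y] z [x] []). }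
    transitivity (word x [y;x;y;z;x;z;x]).
    { exact (word_square x [] y [x;y;z;x;z] [x]). }
    transitivity (word x [y;z;x;z;x]).
    { exact (word_square_head x [y] [z;x;z;x]). }
    exact (word_square x [y] z [x] []). }
  simpl in W. rewrite !mul_assoc in W.
  subst p q. now rewrite !mul_assoc, !mul_idem_r.
Qed.

Definition local_at (x a : S) : Prop := mul (mul x a) x = a.

Lemma local_at_sandwich x w : local_at x (mul (mul x w) x).
Proof.
  unfold local_at.
  now rewrite !mul_assoc, mul_idem, <- (mul_assoc _ x x), mul_idem.
Qed.

Lemma local_at_mul_l x a : local_at x a -> mul x a = a.
Proof. intro Ha. now rewrite <- Ha, !mul_assoc, mul_idem. Qed.

Lemma local_at_mul_r x a : local_at x a -> mul a x = a.
Proof. intro Ha. now rewrite <- Ha, mul_idem_r. Qed.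

Lemma commuting_D_eq a b :
  mul (mul a b) a = a -> mul (mul b a) b = b -> mul a b = mul b a -> a = b.
Proof.
  intros Ha Hb Hab.
  transitivity (mul b a).
  - now rewrite <- Ha at 1; rewrite Hab, <- mul_assoc, mul_idem.
  - now rewrite <- Hb at 2; rewrite <- Hab, mul_idem_r.
Qed.
End Band.

Arguments local_at {S} mul x a.

Section Semiring.
Variables (S : Type) (add mul : S -> S -> S).
Hypothesis add_assoc : forall x y z, add x (add y z) = add (add x y) z.
Hypothesis add_idem : forall x, add x x = x.
Hypothesis mul_assoc : forall x y z, mul x (mul y z) = mul (mul x y) z.
Hypothesis mul_idem : forall x, mul x x = x.
Hypothesis mul_addr : forall x y z, mul x (add y z) = add (mul x y) (mul x z).
Hypothesis mul_addl : forall x y z, mul (add x y) z = add (mul x z) (mul y z).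
Hypothesis sandwich_absorb :
  forall x y, x = add (add (mul (mul x y) x) x) (mul (mul x y) x).

Lemma add_sandwich_l x y : add x (mul (mul x y) x) = x.
Proof.
  set (c := mul (mul x y) x).
  assert (E : x = add (add c x) c) by apply sandwich_absorb.
  rewrite E at 1. rewrite <- add_assoc, add_idem. now symmetry.
Qed.

Lemma add_sandwich_r x y : add (mul (mul x y) x) x = x.
Proof.
  set (c := mul (mul x y) x).
  assert (E : x = add (add c x) c) by apply sandwich_absorb.
  rewrite E at 1. rewrite !add_assoc, add_idem. now symmetry.
Qed.

Lemma add_local_l x v : local_at mul x v -> add x v = x.
Proof. intro Hv. rewrite <- Hv. apply add_sandwich_l. Qed.

Lemma add_local_r x v : local_at mul x v -> add v x = x.
Proof. intro Hv. rewrite <- Hv. apply add_sandwich_r. Qed.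

Section Local.
Variables (x u v : S).
Hypotheses (Hu : local_at mul x u) (Hv : local_at mul x v).

Let xu : mul x u = u := local_at_mul_l _ _ mul_assoc mul_idem x u Hu.
Let ux : mul u x = u := local_at_mul_r _ _ mul_assoc mul_idem x u Hu.

Lemma local_add_mul_rl : add u (mul u v) = u.
Proof.
  transitivity (mul u (add x v)).
  - now rewrite mul_addr, ux.
  - now rewrite add_local_l, ux.
Qed.

Lemma local_add_mul_rr : add (mul u v) u = u.
Proof.
  transitivity (mul u (add v x)).
  - now rewrite mul_addr, ux.
  - now rewrite add_local_r, ux.
Qed.

Lemma local_add_mul_ll : add u (mul v u) = u.
Proof.
  transitivity (mul (add x v) u).
  - now rewrite mul_addl, xu.
  - now rewrite add_local_l, xu.
Qed.

Lemma local_add_mul_lr : add (mul v u) u = u.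
Proof.
  transitivity (mul (add v x) u).
  - now rewrite mul_addl, xu.
  - now rewrite add_local_r, xu.
Qed.
End Local.

Lemma local_mulC x a b : local_at mul x a -> local_at mul x b -> mul a b = mul b a.
Proof.
  intros Ha Hb.
  assert (ab_aba : mul a b = mul (mul a b) a).
  { transitivity (mul a (add (mul b a) b)).
    { now rewrite (local_add_mul_rr x b a Hb Ha). }
    transitivity (mul (mul a b) (add a (mul a b))).
    { now rewrite !mul_addr, mul_idem, mul_assoc. }
    now rewrite (local_add_mul_rl x a b Ha Hb). }
  assert (ba_aba : mul b a = mul (mul a b) a).
  { transitivity (mul (add (mul a b) b) a).
    { now rewrite (local_add_mul_lr x b a Hb Ha). }
    transitivity (mul (add a (mul b a)) (mul b a)).
    { now rewrite !mul_addl, mul_idem, mul_assoc. }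
    now rewrite (local_add_mul_ll x a b Ha Hb), mul_assoc. }
  now rewrite ab_aba, ba_aba.
Qed.
End Semiring.

Theorem theorem4p7 (S : Type) (add mul : S -> S -> S) :
  idempotent_semiring S add mul ->
  (forall x y, x = add (add (mul (mul x y) x) x) (mul (mul x y) x)) ->
  normal_band S mul.
Proof.
  intros (add_assoc & add_idem & mul_assoc & mul_idem & mul_addr & mul_addl) absorb.
  intros x y z.
  apply (commuting_D_eq S mul mul_assoc mul_idem).
  - exact (band_D_xyzx_xzyx S mul mul_assoc mul_idem x y z).
  - exact (band_D_xyzx_xzyx S mul mul_assoc mul_idem x z y).
  - apply (local_mulC S add mul add_assoc add_idem mul_assoc mul_idem
             mul_addr mul_addl absorb x);
      rewrite <- (mul_assoc x); apply local_at_sandwich; assumption.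
Qed.
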